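(* Let $x$ be a context, $\pi_{\mathrm{old}}(\cdot\mid x)$ a distribution on a finite response set $\mathcal Y(x)$, $r:\mathcal Y(x)\to\mathbb R$ a reward, $\beta>0$, and $G\ge1$. Let $y_1,\dots,y_G$ be i.i.d. from $\pi_{\mathrm{old}}(\cdot\mid x)$, $r_j=r(y_j)$, and \[ \widehat A_i^\beta=r_i-\beta\log\Big(\frac1G\sum_{j=1}^G\exp(r_j/\beta)\Big),\qquad A^\beta(x,y)=\mathbb E\big[\widehat A_i^\beta\mid y_i=y\big] \] (which does not depend on $i$). Then $\mathbb E[\exp(\widehat A_i^\beta/\beta)]=1$ and \[ \mathbb E_{y\sim\pi_{\mathrm{old}}(\cdot\mid x)}\Big[\exp\Big(\frac{A^\beta(x,y)}{\beta}\Big)\Big]\le1 . \] Consequently, with $A=A^\beta$, there is no $\tau>0$ satisfying $\mathbb E_{y\sim\pi_{\mathrm{old}}}\big[\frac1\tau W_0(\tau e^{A^\beta(x,y)/\beta})\big]=1$, i.e. the induced Lambert multiplier satisfies $\tau_s\le0$.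
   Context: $W_0$ denotes the principal branch of the Lambert $W$ function, i.e. the inverse of $w\mapsto we^w$ on $[-1,\infty)$, satisfying $W_0(z)e^{W_0(z)}=z$. *)

From HB Require Import structures.
From mathcomp Require Import all_boot all_order all_algebra.
From mathcomp Require Import all_classical all_reals all_analysis.
Set Implicit Arguments. Unset Strict Implicit. Unset Printing Implicit Defensive.
Import Order.TTheory GRing.Theory Num.Theory.
Local Open Scope ring_scope.
Local Open Scope classical_set_scope.

(* Principal branch of Lambert W: the unique w >= -1 with w e^w = z
   (defined for z >= -1/e; arbitrary value 0 outside the domain). *)
Definition W0 {R : realType} (z : R) : R :=
  xget 0 [set w : R | -1 <= w /\ w * expR w = z].

Definition sample (Y : finType) (G : nat) := {ffun 'I_G -> Y}.

Definition iid_weight {R : realType} {Y : finType} {G : nat}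
  (pi : Y -> R) (t : sample Y G) : R := \prod_(j < G) pi (t j).

Definition iid_expect {R : realType} {Y : finType} {G : nat}
  (pi : Y -> R) (f : sample Y G -> R) : R :=
  \sum_(t : sample Y G) iid_weight pi t * f t.

Definition Ahat {R : realType} {Y : finType} {G : nat}
  (r : Y -> R) (beta : R) (i : 'I_G) (t : sample Y G) : R :=
  r (t i) - beta * ln (G%:R^-1 * \sum_(j < G) expR (r (t j) / beta)).

(* A^beta(x,y) = E[ \hat A_i^beta | y_i = y ]: since the y_j are independent,
   this is the expectation over the other coordinates (j != i) drawn i.i.d.
   from pi, with coordinate i fixed to y. *)
Definition Abeta {R : realType} {Y : finType} {G : nat}
  (pi : Y -> R) (r : Y -> R) (beta : R) (i : 'I_G) (y : Y) : R :=
  \sum_(t : sample Y G | t i == y)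
     (\prod_(j < G | j != i) pi (t j)) * Ahat r beta i t.

From HB Require Import structures.
From mathcomp Require Import all_boot all_order all_algebra all_fingroup.
From mathcomp Require Import all_classical all_reals all_analysis.
Import Order.TTheory GRing.Theory Num.Theory.
Local Open Scope ring_scope.
Set Implicit Arguments. Unset Strict Implicit.

(* The i.i.d. law of (y_1, ..., y_G) is exchangeable, so every softmax weight
   exp(r_i/beta) / sum_j exp(r_j/beta) has the same expectation; since
   exp(Ahat_i/beta) is G times the i-th weight and the weights sum to 1, this
   gives E[exp(Ahat_i/beta)] = 1.  Conditioning on y_i = y, Jensen's inequality
   for exp gives exp(A^beta(y)/beta) <= E[exp(Ahat_i/beta) | y_i = y], and
   averaging over y gives E[exp(A^beta/beta)] <= 1.  Finally W0(z) < z for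
   z > 0, so each term W0(tau e^a)/tau of the Lambert equation lies strictly
   below e^a and its mean is strictly below 1. *)

Lemma jensen_expR (R : realType) (T : finType) (P : pred T) (w a : T -> R) :
  (forall t, P t -> 0 <= w t) -> \sum_(t | P t) w t = 1 ->
  expR (\sum_(t | P t) w t * a t) <= \sum_(t | P t) w t * expR (a t).
Proof.
move=> w_ge0 w_sum1; set m := \sum_(t | P t) w t * a t.
have tangent t : P t -> w t * (expR m * (1 + (a t - m))) <= w t * expR (a t).
  move=> Pt; rewrite ler_wpM2l ?w_ge0 //.
  by rewrite -[in leRHS](subrK m (a t)) expRD [leRHS]mulrC ler_wpM2l ?expR_ge0 ?expR_ge1Dx.
apply: le_trans (ler_sum _ tangent).
under eq_bigr do rewrite mulrCA mulrDr mulr1 mulrBr.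
rewrite -mulr_sumr big_split sumrB /= -mulr_suml w_sum1 -/m.
by rewrite mul1r subrr addr0 mulr1.
Qed.

Lemma W0_lt (R : realType) (z : R) : 0 < z -> W0 z < z.
Proof.
move=> z_gt0; rewrite /W0.
case: (pselect (exists w : R, -1 <= w /\ w * expR w = z)) => [ex|nex]; last first.
  by rewrite xgetPN // => w Pw; apply: nex; exists w.
have [_] := xgetPex 0 ex; set w := xget _ _ => wexpw.
have w_gt0 : 0 < w.
  rewrite ltNge; apply/negP => w_le0; move: z_gt0.
  by rewrite -wexpw ltNge mulr_le0_ge0 ?expR_ge0.
by rewrite -wexpw -[X in X < _]mulr1 ltr_pM2l // -expR0 ltr_expR.
Qed.

Lemma ltr_weighted_sum (R : realType) (T : finType) (w f g : T -> R) :
  (forall t, 0 <= w t) -> \sum_t w t = 1 -> (forall t, f t < g t) ->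
  \sum_t w t * f t < \sum_t w t * g t.
Proof.
move=> w_ge0 w_sum1 f_lt_g.
have [t0 w_t0_gt0] : exists t0, 0 < w t0.
  apply/not_existsP => w_le0; move: w_sum1; rewrite big1 => [/eqP|t _].
    by rewrite eq_sym oner_eq0.
  by apply/eqP; rewrite eq_le w_ge0 andbT leNgt; apply/negP/w_le0.
rewrite (bigD1 t0) //= [ltRHS](bigD1 t0) //= ltr_leD ?ltr_pM2l //.
by apply: ler_sum => t _; rewrite ler_wpM2l // ltW.
Qed.

Lemma mean_lambert_lt_mean_expR (R : realType) (T : finType) (w a : T -> R) (tau : R) :
  (forall t, 0 <= w t) -> \sum_t w t = 1 -> 0 < tau ->
  \sum_t w t * (tau^-1 * W0 (tau * expR (a t))) < \sum_t w t * expR (a t).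
Proof.
move=> w_ge0 w_sum1 tau_gt0; apply: ltr_weighted_sum => // t.
by rewrite ltr_pdivrMl // W0_lt // mulr_gt0 ?expR_gt0.
Qed.

Section IidSamples.
Variables (R : realType) (Y : finType) (G : nat).
Implicit Types (pi r : Y -> R) (beta : R) (i : 'I_G) (t : sample Y G) (s : {perm 'I_G}).

Lemma iid_expect_scale pi (c : R) (f : sample Y G -> R) :
  iid_expect pi (fun t => c * f t) = c * iid_expect pi f.
Proof. by rewrite /iid_expect mulr_sumr; apply: eq_bigr => t _; rewrite mulrCA. Qed.

Lemma iid_expect_sum pi (f : 'I_G -> sample Y G -> R) :
  iid_expect pi (fun t => \sum_(i < G) f i t) = \sum_(i < G) iid_expect pi (f i).
Proof.
by rewrite /iid_expect exchange_big /=; apply: eq_bigr => t _; rewrite mulr_sumr.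
Qed.

Lemma iid_expect_cst pi (c : R) :
  \sum_(y : Y) pi y = 1 -> iid_expect pi (fun _ : sample Y G => c) = c.
Proof.
move=> pi_sum1; rewrite /iid_expect -mulr_suml /iid_weight /sample.
rewrite -(bigA_distr_bigA (fun (j : 'I_G) (y : Y) => pi y)) /=.
by rewrite big1 ?mul1r // => j _; rewrite pi_sum1.
Qed.

Definition permute_sample s t : sample Y G := [ffun j => t (s j)].

Lemma permute_sample_inj s : injective (permute_sample s).
Proof.
move=> t1 t2 /ffunP eq_t; apply/ffunP => k; have := eq_t (s^-1 k)%g.
by rewrite !ffunE permKV.
Qed.

Lemma iid_weight_permute pi s t :
  iid_weight pi (permute_sample s t) = iid_weight pi t.
Proof.
rewrite /iid_weight [RHS](reindex_inj (@perm_inj _ s)) /=.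
by apply: eq_bigr => j _; rewrite ffunE.
Qed.

Lemma iid_expect_permute pi s (f : sample Y G -> R) :
  iid_expect pi (f \o permute_sample s) = iid_expect pi f.
Proof.
rewrite /iid_expect [RHS](reindex_inj (@permute_sample_inj s)) /=.
by apply: eq_bigr => t _; rewrite iid_weight_permute.
Qed.

Lemma sum_expR_permute r beta s t :
  \sum_(j < G) expR (r (permute_sample s t j) / beta) =
  \sum_(j < G) expR (r (t j) / beta).
Proof.
rewrite [RHS](reindex_inj (@perm_inj _ s)) /=.
by apply: eq_bigr => j _; rewrite ffunE.
Qed.

Lemma Ahat_permute r beta s i t :
  Ahat r beta i (permute_sample s t) = Ahat r beta (s i) t.
Proof. by rewrite /Ahat sum_expR_permute ffunE. Qed.

Lemma Abeta_permute pi r beta s i y :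
  Abeta pi r beta i y = Abeta pi r beta (s i) y.
Proof.
rewrite /Abeta (reindex_inj (@permute_sample_inj s)) /=.
apply: eq_big => [t|t _]; first by rewrite ffunE.
rewrite Ahat_permute; congr (_ * _).
rewrite [RHS](reindex_inj (@perm_inj _ s)) /=.
apply: eq_big => [j|j _]; first by rewrite (inj_eq (@perm_inj _ s)).
by rewrite ffunE.
Qed.

Lemma Abeta_indep pi r beta i i' y :
  Abeta pi r beta i y = Abeta pi r beta i' y.
Proof. by rewrite (Abeta_permute pi r beta (tperm i i') i) tpermL. Qed.

Definition softmax r beta i t : R :=
  expR (r (t i) / beta) / \sum_(j < G) expR (r (t j) / beta).

Hypothesis G_gt0 : (0 < G)%N.

Lemma sum_expR_gt0 r beta t : 0 < \sum_(j < G) expR (r (t j) / beta).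
Proof.
case: G G_gt0 t => // n _ t.
rewrite big_ord_recl ltr_pwDl ?expR_gt0 //.
by apply: sumr_ge0 => j _; rewrite expR_ge0.
Qed.

Lemma sum_softmax r beta t : \sum_(i < G) softmax r beta i t = 1.
Proof. by rewrite -mulr_suml divff // gt_eqF // sum_expR_gt0. Qed.

Lemma expR_Ahat r beta i t : 0 < beta ->
  expR (Ahat r beta i t / beta) = G%:R * softmax r beta i t.
Proof.
move=> beta_gt0; have S_gt0 := sum_expR_gt0 r beta t.
have G_pos : 0 < (G%:R : R) by rewrite ltr0n.
rewrite /Ahat /softmax mulrBl mulrAC divff ?gt_eqF // mul1r expRD expRN lnK.
  by rewrite invfM invrK mulrCA mulrA.
by rewrite posrE mulr_gt0 // invr_gt0.
Qed.

Lemma iid_expect_softmax_indep pi r beta i i' :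
  iid_expect pi (softmax r beta i) = iid_expect pi (softmax r beta i').
Proof.
rewrite -(iid_expect_permute pi (tperm i i')); congr iid_expect.
by apply/funext => t /=; rewrite /softmax sum_expR_permute ffunE tpermL.
Qed.

Lemma iid_expect_expR_Ahat pi r beta i :
  \sum_(y : Y) pi y = 1 -> 0 < beta ->
  iid_expect pi (fun t => expR (Ahat r beta i t / beta)) = 1.
Proof.
move=> pi_sum1 beta_gt0.
under [fun t => _]funext do rewrite expR_Ahat //.
rewrite iid_expect_scale -[RHS](iid_expect_cst 1 pi_sum1).
have -> : (fun=> 1) = fun t => \sum_(i' < G) softmax r beta i' t.
  by apply/funext => t; rewrite sum_softmax.
rewrite iid_expect_sum -[G in G%:R]card_ord mulr_natl -sumr_const.
by apply: eq_bigr => i' _; apply: iid_expect_softmax_indep.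
Qed.

Lemma iid_expect_disintegrate pi i (f : sample Y G -> R) :
  \sum_(y : Y) pi y * \sum_(t : sample Y G | t i == y)
      (\prod_(j < G | j != i) pi (t j)) * f t = iid_expect pi f.
Proof.
rewrite /iid_expect (partition_big (fun t : sample Y G => t i) predT) //=.
apply: eq_bigr => y _; rewrite mulr_sumr; apply: eq_bigr => t /eqP <-.
by rewrite /iid_weight [in RHS](bigD1 i) //= mulrA.
Qed.

Lemma sum_cond_weight pi i y : \sum_(y : Y) pi y = 1 ->
  \sum_(t : sample Y G | t i == y) \prod_(j < G | j != i) pi (t j) = 1.
Proof.
move=> pi_sum1.
(* the fixed coordinate i carries the point mass at y, the others carry pi *)
pose F (j : 'I_G) (z : Y) : R := if j == i then (z == y)%:R else pi z.
have -> : \sum_(t : sample Y G | t i == y) \prod_(j < G | j != i) pi (t j) =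
          \sum_(t : sample Y G) \prod_(j < G) F j (t j).
  rewrite big_mkcond /=; apply: eq_bigr => t _.
  rewrite [RHS](bigD1 i) //= /F eqxx; case: eqP => _; last by rewrite mul0r.
  by rewrite mul1r; apply: eq_bigr => j /negbTE ->.
rewrite /sample -(bigA_distr_bigA F) /= big1 // => j _.
rewrite /F; case: eqP => _ //.
by rewrite (bigD1 y) //= eqxx big1 ?addr0 // => z /negbTE ->.
Qed.

Lemma mean_expR_Abeta_le1 pi r beta i :
  (forall y, 0 <= pi y) -> \sum_(y : Y) pi y = 1 -> 0 < beta ->
  \sum_(y : Y) pi y * expR (Abeta pi r beta i y / beta) <= 1.
Proof.
move=> pi_ge0 pi_sum1 beta_gt0.
rewrite -(iid_expect_expR_Ahat r i pi_sum1 beta_gt0) -(iid_expect_disintegrate pi i).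
apply: ler_sum => y _; rewrite ler_wpM2l // /Abeta mulr_suml.
under eq_bigr do rewrite -mulrA.
apply: jensen_expR; last exact: sum_cond_weight.
by move=> t _; apply: prodr_ge0.
Qed.

End IidSamples.

Theorem mainTheorem6 (R : realType) (Y : finType) (pi : Y -> R) (r : Y -> R)
  (beta : R) (G : nat)
  (pi_ge0 : forall y, 0 <= pi y) (pi_sum1 : \sum_(y : Y) pi y = 1)
  (beta_gt0 : 0 < beta) (G_ge1 : (1 <= G)%N) :
  (forall i i' : 'I_G, forall y : Y, Abeta pi r beta i y = Abeta pi r beta i' y) /\
  (forall i : 'I_G, iid_expect pi (fun t => expR (Ahat r beta i t / beta)) = 1) /\
  (forall i : 'I_G, \sum_(y : Y) pi y * expR (Abeta pi r beta i y / beta) <= 1) /\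
  (forall i : 'I_G, ~ exists tau : R, 0 < tau /\
      \sum_(y : Y) pi y * (tau^-1 * W0 (tau * expR (Abeta pi r beta i y / beta))) = 1).
Proof.
have mean_le1 i := mean_expR_Abeta_le1 G_ge1 r i pi_ge0 pi_sum1 beta_gt0.
split; first exact: Abeta_indep.
split; first by move=> i; apply: iid_expect_expR_Ahat.
split=> // i [tau [tau_gt0 lambert_eq]].
have := mean_lambert_lt_mean_expR (fun y => Abeta pi r beta i y / beta) pi_ge0 pi_sum1 tau_gt0.
by rewrite lambert_eq ltNge mean_le1.
Qed.
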